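(* Let $f\in C(\mathbb{R}^4)$, $f=f(r,\tau,u,t)$, be bounded, $\kappa$-Lipschitz, $1$-periodic in $r$ and $\tau$, and non-increasing in $u$. Let $\bar f(u_0,t_0)$ be the constant with $\lim_{\varepsilon\to0}u^\varepsilon(t;c,u_0,t_0)=c+\bar f(u_0,t_0)t$, where $u^\varepsilon(\cdot;c,u_0,t_0)$ solves $\dot u^\varepsilon=f(u^\varepsilon/\varepsilon,t/\varepsilon,u_0,t_0)$, $u^\varepsilon(0)=c$. Let $\overline u(t;c)$ be the solution of $\dot{\overline u}=\bar f(\overline u,t)$, $\overline u(0)=c$, and $u^\varepsilon(t;c)$ the solution of $\dot u^\varepsilon=f(u^\varepsilon/\varepsilon,t/\varepsilon,u^\varepsilon,t)$, $u^\varepsilon(0)=c$. Then for all $t>0$ and $c\in\mathbb{R}$, $|u^\varepsilon(t;c)-\overline u(t;c)|\le 2\|f\|_\infty t$. *)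

From Stdlib Require Import Reals.
From Coquelicot Require Import Coquelicot.
Open Scope R_scope.

Definition fun4 := R -> R -> R -> R -> R.

Definition continuous4 (f : fun4) : Prop :=
  forall r tau u t,
    continuous (fun p : R * R * R * R =>
                  let '(r', tau', u', t') := p in f r' tau' u' t') (r, tau, u, t).

Definition bounded4 (f : fun4) : Prop :=
  exists M, forall r tau u t, Rabs (f r tau u t) <= M.

Definition lipschitz4 (kappa : R) (f : fun4) : Prop :=
  forall r tau u t r' tau' u' t',
    Rabs (f r tau u t - f r' tau' u' t') <=
    kappa * sqrt ((r - r')^2 + (tau - tau')^2 + (u - u')^2 + (t - t')^2).

Definition periodic_r_tau (f : fun4) : Prop :=
  forall r tau u t, f (r + 1) tau u t = f r tau u t /\ f r (tau + 1) u t = f r tau u t.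

Definition nonincreasing_u (f : fun4) : Prop :=
  forall r tau u1 u2 t, u1 <= u2 -> f r tau u2 t <= f r tau u1 t.

Definition supnorm (f : fun4) : R :=
  real (Lub_Rbar (fun y => exists r tau u t, y = Rabs (f r tau u t))).

Definition solves (g : R -> R -> R) (c : R) (v : R -> R) : Prop :=
  v 0 = c /\ forall t, is_derive v t (g t (v t)).

Definition is_effective (f : fun4) (fbar : R -> R -> R) : Prop :=
  forall u0 t0 c (ueps : R -> R -> R),
    (forall eps, 0 < eps ->
       solves (fun t v => f (v / eps) (t / eps) u0 t0) c (ueps eps)) ->
    forall t, filterlim (fun eps => ueps eps t) (at_right 0) (locally (c + fbar u0 t0 * t)).

From Stdlib Require Import Reals Lra Psatz.
From Coquelicot Require Import Coquelicot.
Open Scope R_scope.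

(* Both equations have right-hand sides bounded by ||f||: that of u^eps trivially,
   that of ubar because |fbar(u0,t0)| is the limit of |u^eps(1; 0, u0, t0)| <= ||f||.
   Hence both solutions stay within ||f|| t of c.  Using the definition of fbar
   requires solutions of the frozen equation to exist; they are built by Picard
   iteration, which is a contraction for the sup-norm weighted by 1/cosh(2Kt), K a
   Lipschitz constant of the frozen field. *)

Lemma is_derive_continuity_pt (F : R -> R) (x l : R) :
  is_derive F x l -> continuity_pt F x.
Proof.
  intro HF. apply continuity_pt_filterlim.
  apply (ex_derive_continuous (K := R_AbsRing) (V := R_NormedModule)).
  exists l; exact HF.
Qed.

Lemma is_derive_nonneg_le (F dF : R -> R) (a b : R) :
  (forall s, is_derive F s (dF s)) -> (forall s, 0 <= dF s) -> a <= b -> F a <= F b.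
Proof.
  intros HF Hpos Hab.
  destruct (MVT_gen F a b dF) as [x [_ Hx]].
  - intros; apply HF.
  - intros; eapply is_derive_continuity_pt; apply HF.
  - pose proof (Hpos x). nra.
Qed.

Lemma Rabs_sub_le_of_is_derive_dominated (F dF G dG : R -> R) :
  (forall s, is_derive F s (dF s)) -> (forall s, is_derive G s (dG s)) ->
  (forall s, Rabs (dF s) <= dG s) ->
  forall a b, Rabs (F b - F a) <= Rabs (G b - G a).
Proof.
  intros HF HG Hd.
  assert (Hmono : forall a b, a <= b -> Rabs (F b - F a) <= G b - G a).
  { intros a b Hab.
    assert (HGF : G a - F a <= G b - F b).
    { apply (is_derive_nonneg_le (fun s => G s - F s) (fun s => dG s - dF s)); auto.
      - intro s. apply (is_derive_minus G F); auto.
      - intro s. pose proof (Hd s). pose proof (Rle_abs (dF s)). lra. }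
    assert (HGpF : G a + F a <= G b + F b).
    { apply (is_derive_nonneg_le (fun s => G s + F s) (fun s => dG s + dF s)); auto.
      - intro s. apply (is_derive_plus G F); auto.
      - intro s. pose proof (Hd s). pose proof (Rle_abs (- dF s)).
        rewrite Rabs_Ropp in *. lra. }
    apply Rabs_le; lra. }
  intros a b. destruct (Rle_or_lt a b) as [Hab | Hba].
  - pose proof (Hmono a b Hab). pose proof (Rle_abs (G b - G a)). lra.
  - pose proof (Hmono b a (Rlt_le _ _ Hba)).
    rewrite (Rabs_minus_sym (F b)), (Rabs_minus_sym (G b)).
    pose proof (Rle_abs (G a - G b)). lra.
Qed.

Lemma Rabs_sub_le_of_is_derive_bounded (F dF : R -> R) (M : R) :
  (forall s, is_derive F s (dF s)) -> (forall s, Rabs (dF s) <= M) ->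
  forall a b, Rabs (F b - F a) <= M * Rabs (b - a).
Proof.
  intros HF Hd a b.
  assert (HM : 0 <= M) by (pose proof (Hd 0); pose proof (Rabs_pos (dF 0)); lra).
  eapply Rle_trans.
  - apply (Rabs_sub_le_of_is_derive_dominated F dF (fun s => M * s) (fun _ => M)); auto.
    intro s. auto_derive; auto. ring.
  - right. rewrite <- Rmult_minus_distr_l, Rabs_mult, (Rabs_pos_eq M); auto.
Qed.

Lemma continuous_of_lipschitz (h : R -> R) (L x : R) :
  (forall a b, Rabs (h a - h b) <= L * Rabs (a - b)) -> continuous h x.
Proof.
  intros Hh. apply filterlim_locally. intro eps.
  assert (Hdelta : 0 < eps / (Rabs L + 1)).
  { apply Rdiv_lt_0_compat; [apply cond_pos | pose proof (Rabs_pos L); lra]. }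
  exists (mkposreal _ Hdelta). intros y Hy.
  change (Rabs (y - x) < eps / (Rabs L + 1)) in Hy.
  change (Rabs (h y - h x) < eps).
  pose proof (Hh y x). pose proof (Rle_abs L). pose proof (Rabs_pos L).
  pose proof (Rabs_pos (y - x)).
  assert (Hlt : (Rabs L + 1) * Rabs (y - x) < eps).
  { apply (Rmult_lt_compat_l (Rabs L + 1)) in Hy; [|lra].
    replace ((Rabs L + 1) * (eps / (Rabs L + 1))) with (pos eps) in Hy by (field; lra).
    exact Hy. }
  nra.
Qed.

Lemma is_lim_seq_ub (u : nat -> R) (l b : R) :
  is_lim_seq u l -> (forall n, u n <= b) -> l <= b.
Proof.
  intros Hu Hb. exact (is_lim_seq_le u (fun _ => b) l b Hb Hu (is_lim_seq_const b)).
Qed.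

Lemma eq0_of_Rabs_le_geom (x B : R) : (forall n, Rabs x <= B * (/2)^n) -> x = 0.
Proof.
  intro Hx.
  assert (Hlim : is_lim_seq (fun n => B * (/2)^n) (B * 0)).
  { apply (is_lim_seq_scal_l _ B 0). apply is_lim_seq_geom.
    rewrite Rabs_pos_eq; lra. }
  pose proof (is_lim_seq_le (fun _ => Rabs x) _ (Rabs x) (B * 0) Hx
                (is_lim_seq_const _) Hlim) as Hle.
  simpl in Hle. rewrite Rmult_0_r in Hle.
  destruct (Req_dec x 0) as [|Hne]; auto. pose proof (Rabs_pos_lt x Hne). lra.
Qed.

Section GeometricIncrements.

Variables (u : nat -> R) (B : R).
Hypothesis Hinc : forall n, Rabs (u (S n) - u n) <= B * (/2)^n.

Lemma geometric_increments_bound_nonneg : 0 <= B.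
Proof.
  pose proof (Hinc 0) as Hinc0. pose proof (Rabs_pos (u 1%nat - u 0%nat)).
  rewrite pow_O, Rmult_1_r in Hinc0. lra.
Qed.

Lemma geometric_increments_partial n k :
  Rabs (u (n + k) - u n) <= 2 * B * ((/2)^n - (/2)^(n + k)).
Proof.
  induction k as [|k IHk].
  - rewrite Nat.add_0_r, !Rminus_diag, Rabs_R0. lra.
  - rewrite Nat.add_succ_r.
    replace (u (S (n + k)) - u n) with ((u (S (n + k)) - u (n + k)) + (u (n + k) - u n))
      by ring.
    eapply Rle_trans; [apply Rabs_triang|].
    eapply Rle_trans; [apply Rplus_le_compat; [apply Hinc | apply IHk]|].
    right. simpl. field.
Qed.

Lemma geometric_increments_tail n m :
  (n <= m)%nat -> Rabs (u m - u n) <= 2 * B * (/2)^n.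
Proof.
  intro Hnm. replace m with (n + (m - n))%nat by lia.
  eapply Rle_trans; [apply geometric_increments_partial|].
  pose proof geometric_increments_bound_nonneg as HB.
  assert (0 <= (/2)^(n + (m - n))) by (apply pow_le; lra).
  nra.
Qed.

Lemma geometric_increments_cauchy : ex_lim_seq_cauchy u.
Proof.
  intro eps.
  pose proof geometric_increments_bound_nonneg as HB.
  destruct (pow_lt_1_zero (/2) ltac:(rewrite Rabs_pos_eq; lra) (eps / (4 * B + 1)))
    as [N HN].
  { apply Rdiv_lt_0_compat; [apply cond_pos | lra]. }
  exists N. intros n m Hn Hm.
  specialize (HN N (le_n N)). rewrite Rabs_pos_eq in HN by (apply pow_le; lra).
  assert (Hsmall : (4 * B + 1) * (/2)^N < eps).
  { apply (Rmult_lt_compat_l (4 * B + 1)) in HN; [|lra].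
    replace ((4 * B + 1) * (eps / (4 * B + 1))) with (pos eps) in HN by (field; lra).
    exact HN. }
  replace (u n - u m) with ((u n - u N) - (u m - u N)) by ring.
  eapply Rle_lt_trans; [apply Rabs_triang|]. rewrite Rabs_Ropp.
  pose proof (geometric_increments_tail N n Hn).
  pose proof (geometric_increments_tail N m Hm).
  assert (0 <= (/2)^N) by (apply pow_le; lra).
  nra.
Qed.

Lemma is_lim_seq_geometric_increments : is_lim_seq u (real (Lim_seq u)).
Proof.
  destruct (proj2 (ex_lim_seq_cauchy_corr u) geometric_increments_cauchy) as [l Hl].
  rewrite (is_lim_seq_unique _ _ Hl). exact Hl.
Qed.

Lemma geometric_increments_lim_tail n :
  Rabs (real (Lim_seq u) - u n) <= 2 * B * (/2)^n.
Proof.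
  apply (is_lim_seq_ub (fun k => Rabs (u (k + n)%nat - u n))).
  - apply (is_lim_seq_abs _ (real (Lim_seq u) - u n)).
    apply (is_lim_seq_minus' _ _ (real (Lim_seq u)) (u n)).
    + apply (is_lim_seq_incr_n u n). apply is_lim_seq_geometric_increments.
    + apply is_lim_seq_const.
  - intro k. apply geometric_increments_tail. lia.
Qed.

End GeometricIncrements.

Lemma one_le_cosh x : 1 <= cosh x.
Proof.
  unfold cosh. pose proof (exp_ineq1_le x). pose proof (exp_ineq1_le (- x)). lra.
Qed.

Lemma Rabs_sinh_le_cosh x : Rabs (sinh x) <= cosh x.
Proof.
  unfold sinh, cosh. pose proof (exp_pos x). pose proof (exp_pos (- x)).
  apply Rabs_le. lra.
Qed.

Lemma is_derive_sinh_scal (l s : R) :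
  is_derive (fun s => sinh (l * s)) s (l * cosh (l * s)).
Proof.
  apply (is_derive_comp sinh (fun s => l * s)).
  - apply is_derive_Reals, derivable_pt_lim_sinh.
  - auto_derive; auto. ring.
Qed.

Lemma Rabs_sub_le_cosh (F dF : R -> R) (l C : R) :
  0 < l -> (forall s, is_derive F s (dF s)) ->
  (forall s, Rabs (dF s) <= C * cosh (l * s)) ->
  forall t, Rabs (F t - F 0) <= C / l * cosh (l * t).
Proof.
  intros Hl HF Hd t.
  assert (HC : 0 <= C).
  { pose proof (Hd 0) as Hd0. rewrite Rmult_0_r, cosh_0 in Hd0.
    pose proof (Rabs_pos (dF 0)). lra. }
  assert (HG : forall s, is_derive (fun s => C / l * sinh (l * s)) s (C * cosh (l * s))).
  { intro s. replace (C * cosh (l * s)) with (C / l * (l * cosh (l * s))) by (field; lra).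
    apply (is_derive_scal (fun s => sinh (l * s))), is_derive_sinh_scal. }
  eapply Rle_trans; [exact (Rabs_sub_le_of_is_derive_dominated F dF _ _ HF HG Hd 0 t)|].
  cbv beta. rewrite Rmult_0_r, sinh_0, Rmult_0_r, Rminus_0_r, Rabs_mult, Rabs_pos_eq.
  - apply Rmult_le_compat_l, Rabs_sinh_le_cosh.
    apply Rmult_le_pos, Rlt_le, Rinv_0_lt_compat; lra.
  - apply Rmult_le_pos, Rlt_le, Rinv_0_lt_compat; lra.
Qed.

Definition picard (g : R -> R -> R) (c : R) (p : R -> R) (t : R) : R :=
  c + RInt (fun s => g s (p s)) 0 t.

Definition picard_iter (g : R -> R -> R) (c : R) (n : nat) : R -> R :=
  Nat.iter n (picard g c) (fun _ => c).

Definition picard_sol (g : R -> R -> R) (c : R) (t : R) : R :=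
  real (Lim_seq (fun n => picard_iter g c n t)).

Section Picard.

Variables (g : R -> R -> R) (M K c : R).
Hypothesis HK : 0 < K.
Hypothesis Hbound : forall t v, Rabs (g t v) <= M.
Hypothesis Hlip : forall t v t' v', Rabs (g t v - g t' v') <= K * (Rabs (t - t') + Rabs (v - v')).

Let weight t := M / (2 * K) * cosh (2 * K * t).

Lemma continuous_field_comp (p : R -> R) x :
  continuous p x -> continuous (fun s => g s (p s)) x.
Proof.
  intros Hp. apply filterlim_locally. intro eps.
  assert (Hdelta : 0 < eps / (2 * K)) by (apply Rdiv_lt_0_compat; [apply cond_pos | lra]).
  pose proof (proj1 (filterlim_locally p (p x)) Hp (mkposreal _ Hdelta)) as Hpx.
  generalize (filter_and _ _ Hpx (locally_ball x (mkposreal _ Hdelta))).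
  apply filter_imp. intros y [Hpy Hy].
  change (Rabs (p y - p x) < eps / (2 * K)) in Hpy.
  change (Rabs (y - x) < eps / (2 * K)) in Hy.
  change (Rabs (g y (p y) - g x (p x)) < eps).
  eapply Rle_lt_trans; [apply Hlip|].
  replace (pos eps) with (K * (2 * (eps / (2 * K)))) by (field; lra).
  apply Rmult_lt_compat_l; lra.
Qed.

Lemma picard_0 p : picard g c p 0 = c.
Proof. unfold picard. rewrite RInt_point. apply Rplus_0_r. Qed.

Lemma is_derive_picard (p : R -> R) :
  (forall x, continuous p x) -> forall t, is_derive (picard g c p) t (g t (p t)).
Proof.
  intros Hp t.
  assert (Hgp : forall x, continuous (fun s => g s (p s)) x)
    by (intro; apply continuous_field_comp, Hp).
  assert (HI : is_derive (RInt (fun s => g s (p s)) 0) t (g t (p t))).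
  { apply (is_derive_RInt (fun s => g s (p s)) _ 0).
    - apply filter_forall. intro b.
      apply (RInt_correct (V := R_CompleteNormedModule)).
      apply (ex_RInt_continuous (V := R_CompleteNormedModule)). intros; apply Hgp.
    - apply Hgp. }
  pose proof (is_derive_plus (fun _ => c) _ t zero _ (is_derive_const c t) HI) as Hsum.
  rewrite plus_zero_l in Hsum. exact Hsum.
Qed.

Lemma continuous_picard_iter n x : continuous (picard_iter g c n) x.
Proof.
  revert x. induction n as [|n IHn]; intro x.
  - apply continuous_const.
  - apply (ex_derive_continuous (K := R_AbsRing) (V := R_NormedModule)).
    eexists. exact (is_derive_picard _ IHn x).
Qed.

Lemma is_derive_picard_iter n t :
  is_derive (picard_iter g c (S n)) t (g t (picard_iter g c n t)).
Proof. exact (is_derive_picard _ (continuous_picard_iter n) t). Qed.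

Lemma picard_lipschitz p a b : (forall x, continuous p x) ->
  Rabs (picard g c p b - picard g c p a) <= M * Rabs (b - a).
Proof.
  intro Hp. apply (Rabs_sub_le_of_is_derive_bounded _ _ M (is_derive_picard p Hp)).
  intro; apply Hbound.
Qed.

Lemma picard_dev p t : (forall x, continuous p x) ->
  Rabs (picard g c p t - c) <= weight t.
Proof.
  intro Hp. rewrite <- (picard_0 p) at 2. unfold weight.
  apply (Rabs_sub_le_cosh _ (fun s => g s (p s)) (2 * K) M);
    [lra | apply is_derive_picard, Hp |].
  intro s. pose proof (Hbound s (p s)). pose proof (one_le_cosh (2 * K * s)).
  assert (0 <= M) by (pose proof (Rabs_pos (g s (p s))); lra). nra.
Qed.

Lemma picard_contraction p q (a : R) : (forall x, continuous p x) -> (forall x, continuous q x) ->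
  (forall s, Rabs (p s - q s) <= a * cosh (2 * K * s)) ->
  forall t, Rabs (picard g c p t - picard g c q t) <= a / 2 * cosh (2 * K * t).
Proof.
  intros Hp Hq Hpq t.
  replace (a / 2) with (K * a / (2 * K)) by (field; lra).
  replace (picard g c p t - picard g c q t)
    with ((picard g c p t - picard g c q t) - (picard g c p 0 - picard g c q 0))
    by (rewrite !picard_0; ring).
  apply (Rabs_sub_le_cosh (fun t => picard g c p t - picard g c q t)
           (fun s => g s (p s) - g s (q s))); [lra | |].
  - intro s. apply (is_derive_minus (picard g c p) (picard g c q));
      apply is_derive_picard; assumption.
  - intro s. eapply Rle_trans; [apply Hlip|].
    rewrite Rminus_diag, Rabs_R0, Rplus_0_l, Rmult_assoc.
    apply Rmult_le_compat_l; [lra | apply Hpq].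
Qed.

Lemma picard_iter_increment n t :
  Rabs (picard_iter g c (S n) t - picard_iter g c n t) <= weight t * (/2)^n.
Proof.
  revert t. induction n as [|n IHn]; intro t.
  - rewrite Rmult_1_r. exact (picard_dev _ t (continuous_picard_iter 0)).
  - unfold weight in *.
    replace (M / (2 * K) * cosh (2 * K * t) * (/2)^(S n))
      with (M / (2 * K) * (/2)^n / 2 * cosh (2 * K * t)) by (simpl; field; lra).
    apply (picard_contraction (picard_iter g c (S n)) (picard_iter g c n));
      [apply continuous_picard_iter .. |].
    intro s. replace (M / (2 * K) * (/2)^n * cosh (2 * K * s))
      with (M / (2 * K) * cosh (2 * K * s) * (/2)^n) by ring.
    apply IHn.
Qed.

Lemma is_lim_seq_picard_iter t :
  is_lim_seq (fun n => picard_iter g c n t) (picard_sol g c t).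
Proof.
  exact (is_lim_seq_geometric_increments _ _ (fun n => picard_iter_increment n t)).
Qed.

Lemma picard_sol_tail n t :
  Rabs (picard_sol g c t - picard_iter g c n t) <= 2 * weight t * (/2)^n.
Proof.
  exact (geometric_increments_lim_tail _ _ (fun n => picard_iter_increment n t) n).
Qed.

Lemma picard_sol_lipschitz a b :
  Rabs (picard_sol g c b - picard_sol g c a) <= M * Rabs (b - a).
Proof.
  apply (is_lim_seq_ub (fun n => Rabs (picard_iter g c n b - picard_iter g c n a))).
  - apply (is_lim_seq_abs _ (picard_sol g c b - picard_sol g c a)).
    apply is_lim_seq_minus'; apply is_lim_seq_picard_iter.
  - intros [|n].
    + simpl. rewrite Rminus_diag, Rabs_R0.
      pose proof (Hbound 0 0). pose proof (Rabs_pos (g 0 0)). pose proof (Rabs_pos (b - a)).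
      nra.
    + apply picard_lipschitz, continuous_picard_iter.
Qed.

Lemma continuous_picard_sol x : continuous (picard_sol g c) x.
Proof.
  apply (continuous_of_lipschitz _ M). intros a b. apply picard_sol_lipschitz.
Qed.

Lemma picard_sol_fixed t : picard g c (picard_sol g c) t = picard_sol g c t.
Proof.
  apply Rminus_diag_uniq, (eq0_of_Rabs_le_geom _ (2 * weight t)). intro n.
  replace (picard g c (picard_sol g c) t - picard_sol g c t)
    with ((picard g c (picard_sol g c) t - picard_iter g c (S n) t)
          - (picard_sol g c t - picard_iter g c (S n) t)) by ring.
  eapply Rle_trans; [apply Rabs_triang|]. rewrite Rabs_Ropp.
  assert (Hcontr : Rabs (picard g c (picard_sol g c) t - picard_iter g c (S n) t)
                   <= weight t * (/2)^n).
  { unfold weight.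
    replace (M / (2 * K) * cosh (2 * K * t) * (/2)^n)
      with (2 * (M / (2 * K)) * (/2)^n / 2 * cosh (2 * K * t)) by (field; lra).
    apply picard_contraction;
      [apply continuous_picard_sol | apply continuous_picard_iter |].
    intro s. eapply Rle_trans; [apply picard_sol_tail|].
    unfold weight. right. ring. }
  pose proof (picard_sol_tail (S n) t). simpl pow in *. lra.
Qed.

Lemma solves_picard_sol : solves g c (picard_sol g c).
Proof.
  split.
  - rewrite <- (picard_sol_fixed 0). apply picard_0.
  - intro t. apply (is_derive_ext (picard g c (picard_sol g c))).
    + apply picard_sol_fixed.
    + apply is_derive_picard, continuous_picard_sol.
Qed.

End Picard.

Lemma solves_Rabs_sub_le (g : R -> R -> R) (M c : R) (v : R -> R) :
  (forall t w, Rabs (g t w) <= M) -> solves g c v ->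
  forall t, Rabs (v t - c) <= M * Rabs t.
Proof.
  intros Hg [Hv0 Hv] t. rewrite <- Hv0. replace (Rabs t) with (Rabs (t - 0)) by (f_equal; ring).
  apply (Rabs_sub_le_of_is_derive_bounded v (fun s => g s (v s))); auto.
Qed.

Lemma Rabs_le_supnorm (f : fun4) : bounded4 f ->
  forall r tau u t, Rabs (f r tau u t) <= supnorm f.
Proof.
  intros [B HB] r tau u t. unfold supnorm.
  set (E := fun y => exists r tau u t, y = Rabs (f r tau u t)).
  destruct (Lub_Rbar_correct E) as [Hub Hlub].
  assert (HleB : Rbar_le (Lub_Rbar E) B).
  { apply Hlub. intros y [r' [tau' [u' [t' ->]]]]. apply HB. }
  assert (Hge : Rbar_le (Rabs (f r tau u t)) (Lub_Rbar E)).
  { apply Hub. exists r, tau, u, t. reflexivity. }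
  destruct (Lub_Rbar E); simpl in *; tauto.
Qed.

Lemma sqrt_sum_sqr_le_sum_abs (x y : R) : sqrt (x ^ 2 + y ^ 2) <= Rabs x + Rabs y.
Proof.
  pose proof (Rabs_pos x). pose proof (Rabs_pos y).
  rewrite <- (sqrt_pow2 (Rabs x + Rabs y)) by lra.
  apply sqrt_le_1_alt. rewrite <- (pow2_abs x), <- (pow2_abs y). nra.
Qed.

Lemma frozen_field_lipschitz (f : fun4) (kappa eps u0 t0 : R) :
  0 < eps -> lipschitz4 kappa f ->
  forall t v t' v', Rabs (f (v / eps) (t / eps) u0 t0 - f (v' / eps) (t' / eps) u0 t0)
     <= (Rabs kappa / eps + 1) * (Rabs (t - t') + Rabs (v - v')).
Proof.
  intros Heps Hlip t v t' v'.
  eapply Rle_trans; [apply Hlip|].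
  replace ((v / eps - v' / eps) ^ 2 + (t / eps - t' / eps) ^ 2 + (u0 - u0) ^ 2 + (t0 - t0) ^ 2)
    with (((v - v') / eps) ^ 2 + ((t - t') / eps) ^ 2) by (field; lra).
  pose proof (sqrt_sum_sqr_le_sum_abs ((v - v') / eps) ((t - t') / eps)) as Hsqrt.
  unfold Rdiv in Hsqrt. rewrite !Rabs_mult, (Rabs_pos_eq (/ eps)) in Hsqrt
    by (apply Rlt_le, Rinv_0_lt_compat; lra).
  pose proof (sqrt_pos (((v - v') / eps) ^ 2 + ((t - t') / eps) ^ 2)).
  pose proof (Rle_abs kappa). pose proof (Rabs_pos kappa).
  pose proof (Rabs_pos (t - t')). pose proof (Rabs_pos (v - v')).
  assert (Hk : Rabs kappa / eps * (Rabs (t - t') + Rabs (v - v'))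
               = Rabs kappa * (Rabs (v - v') * / eps + Rabs (t - t') * / eps))
    by (field; lra).
  nra.
Qed.

Lemma Rabs_effective_le_supnorm (f : fun4) (kappa : R) (fbar : R -> R -> R) :
  bounded4 f -> lipschitz4 kappa f -> is_effective f fbar ->
  forall u0 t0, Rabs (fbar u0 t0) <= supnorm f.
Proof.
  intros Hbdd Hlip Hfbar u0 t0.
  pose proof (Rabs_le_supnorm f Hbdd) as HM.
  set (frozen eps := fun t v => f (v / eps) (t / eps) u0 t0).
  assert (Hsol : forall eps, 0 < eps -> solves (frozen eps) 0 (picard_sol (frozen eps) 0)).
  { intros eps Heps. apply (solves_picard_sol _ (supnorm f) (Rabs kappa / eps + 1)).
    - pose proof (Rabs_pos kappa).
      assert (0 <= Rabs kappa / eps) by (apply Rmult_le_pos, Rlt_le, Rinv_0_lt_compat; lra).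
      lra.
    - intros; apply HM.
    - apply frozen_field_lipschitz; assumption. }
  pose proof (Hfbar u0 t0 0 _ Hsol 1) as Hlim.
  rewrite Rplus_0_l, Rmult_1_r in Hlim.
  apply (closed_filterlim_loc _ (fun y => Rabs y <= supnorm f) _ Hlim).
  - exists (mkposreal _ Rlt_0_1). intros eps _ Heps.
    pose proof (solves_Rabs_sub_le _ _ _ _ (fun t v => HM _ _ _ _) (Hsol eps Heps) 1) as Hb.
    rewrite Rminus_0_r, Rabs_R1, Rmult_1_r in Hb. exact Hb.
  - apply (closed_comp Rabs (fun y => y <= supnorm f)).
    + intro; apply continuous_Rabs.
    + apply closed_le.
Qed.

Theorem lemma2p6 (f : fun4) (kappa : R) (fbar : R -> R -> R)
  (Hcont : continuous4 f) (Hbdd : bounded4 f) (Hlip : lipschitz4 kappa f)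
  (Hper : periodic_r_tau f) (Hmon : nonincreasing_u f)
  (Hfbar : is_effective f fbar) :
  forall (c : R) (ubar : R -> R),
    solves (fun t v => fbar v t) c ubar ->
    forall (eps : R) (ue : R -> R), 0 < eps ->
      solves (fun t v => f (v / eps) (t / eps) v t) c ue ->
      forall t, 0 < t -> Rabs (ue t - ubar t) <= 2 * supnorm f * t.
Proof.
  intros c ubar Hubar eps ue Heps Hue t Ht.
  pose proof (solves_Rabs_sub_le _ _ _ _
                (fun t v => Rabs_le_supnorm f Hbdd _ _ _ _) Hue t) as Hue_dev.
  pose proof (solves_Rabs_sub_le _ _ _ _
                (fun t v => Rabs_effective_le_supnorm f kappa fbar Hbdd Hlip Hfbar v t)
                Hubar t) as Hubar_dev.
  rewrite (Rabs_pos_eq t) in Hue_dev, Hubar_dev by lra.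
  replace (ue t - ubar t) with ((ue t - c) - (ubar t - c)) by ring.
  eapply Rle_trans; [apply Rabs_triang|]. rewrite Rabs_Ropp. lra.
Qed.
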